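(* Let $f,g,\beta$ be functions with $\lim_{x\to\infty}f(x)=\lim_{x\to\infty}g(x)=\lim_{x\to\infty}\beta(x)=\infty$. If a problem $\Pi_0$ is $(f,g)$-FPT gap reducible to a problem $\Pi_1$ and $\Pi_0$ is $\beta$-weakly inherently enumerative, then there is a constant $c>0$ such that $\Pi_1$ is $(c\cdot\beta\circ g)$-weakly inherently enumerative.
   Context: An optimization problem $\Pi$ has instances $I$ with optimum value $\mathrm{OPT}_\Pi(I)$. $O_{q,r}(\cdot)$ hides a multiplicative factor depending only on $q,r$. $\Pi_0$ is $(f,g)$-FPT gap reducible to $\Pi_1$ if there is an algorithm that takes an instance $I_0$ of $\Pi_0$ and integers $q,r$, runs in time $t(q,r)\cdot|I_0|^{O(1)}$ for some computable $t$, and produces an instance $I_1$ of $\Pi_1$ such that: for every positive integer $q$, if $\mathrm{OPT}_{\Pi_0}(I_0)\ge q$ then $\mathrm{OPT}_{\Pi_1}(I_1)\ge f(q)$; and for every positive integer $r$, if $\mathrm{OPT}_{\Pi_0}(I_0)<g(r)$ then $\mathrm{OPT}_{\Pi_1}(I_1)<r$. For $\beta$ with $\beta(r)\to\infty$, $\Pi$ is $\beta$-weakly inherently enumerative if there is a constant $r_0>0$ such that for all integers $q\ge r\ge r_0$ no algorithm can, on every instance $I$, decide whether $\mathrm{OPT}_\Pi(I)<r$ or $\mathrm{OPT}_\Pi(I)\ge q$ in time $O_{q,r}(|I|^{\beta(r)})$. *)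

From Stdlib Require Import Reals Lra Lia List Arith.
Import ListNotations.
Open Scope R_scope.

(** * A concrete model of computation: a WHILE-language over registers
    holding bit strings (Jones-style), with unit-cost steps. *)

Definition state := nat -> list bool.

Definition upd (s : state) (i : nat) (v : list bool) : state :=
  fun j => if Nat.eqb j i then v else s j.

Inductive cmd : Type :=
| CCons  (i : nat) (b : bool)
| CTail  (i : nat)
| CCopy  (i j : nat)
| CSeq   (c1 c2 : cmd)
| CIf    (i : nat) (c1 c2 : cmd)
| CWhile (i : nat) (c : cmd).

Inductive exec : cmd -> state -> state -> nat -> Prop :=
| ECons i b s : exec (CCons i b) s (upd s i (b :: s i)) 1
| ETail i s : exec (CTail i) s (upd s i (tl (s i))) 1
| ECopy i j s : exec (CCopy i j) s (upd s i (s j)) 1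
| ESeq c1 c2 s1 s2 s3 n1 n2 :
    exec c1 s1 s2 n1 -> exec c2 s2 s3 n2 -> exec (CSeq c1 c2) s1 s3 (n1 + n2)
| EIfT i c1 c2 s s' n :
    hd false (s i) = true -> exec c1 s s' n -> exec (CIf i c1 c2) s s' (S n)
| EIfF i c1 c2 s s' n :
    hd false (s i) = false -> exec c2 s s' n -> exec (CIf i c1 c2) s s' (S n)
| EWhileF i c s : s i = [] -> exec (CWhile i c) s s 1
| EWhileT i c s s1 s2 n1 n2 :
    s i <> [] -> exec c s s1 n1 -> exec (CWhile i c) s1 s2 n2 ->
    exec (CWhile i c) s s2 (S (n1 + n2)).

(** Initial states: inputs in registers 0,1,2,...; all others empty.
    Output is read from register 0. *)
Definition init1 (x : list bool) : state :=
  fun j => match j with 0%nat => x | _ => [] end.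
Definition init2 (x y : list bool) : state :=
  fun j => match j with 0%nat => x | 1%nat => y | _ => [] end.
Definition init3 (x y z : list bool) : state :=
  fun j => match j with 0%nat => x | 1%nat => y | 2%nat => z | _ => [] end.

Definition unary (n : nat) : list bool := repeat true n.

Definition computable2 (t : nat -> nat -> nat) : Prop :=
  exists P : cmd, forall q r : nat, exists s n,
    exec P (init2 (unary q) (unary r)) s n /\ s 0%nat = unary (t q r).

Record opt_problem : Type := { OPT : list bool -> nat }.

Definition fpt_gap_reducible (P0 P1 : opt_problem) (f g : nat -> nat) : Prop :=
  exists (Red : cmd) (t : nat -> nat -> nat) (d : nat),
    computable2 t /\
    forall (I0 : list bool) (q r : nat), exists s n,
      exec Red (init3 I0 (unary q) (unary r)) s n /\
      (n <= t q r * (S (length I0)) ^ d)%nat /\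
      ((0 < q)%nat -> (q <= OPT P0 I0)%nat -> (f q <= OPT P1 (s 0%nat))%nat) /\
      ((0 < r)%nat -> (OPT P0 I0 < g r)%nat -> (OPT P1 (s 0%nat) < r)%nat).

(** Program [A] decides the gap problem "OPT < r  vs  OPT >= q" of [P]
    (answer = head of register 0, true meaning OPT >= q) on every instance,
    in time O_{q,r}(|I|^e). *)
Definition decides_gap_in_time (P : opt_problem) (A : cmd) (q r : nat) (e : R)
  : Prop :=
  exists (C : R) (n0 : nat), forall I : list bool, exists s n,
    exec A (init1 I) s n /\
    ((OPT P I < r)%nat -> hd false (s 0%nat) = false) /\
    ((q <= OPT P I)%nat -> hd false (s 0%nat) = true) /\
    ((n0 <= length I)%nat -> INR n <= C * Rpower (INR (length I)) e).

Definition weakly_inherently_enumerative (P : opt_problem) (beta : nat -> R)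
  : Prop :=
  exists r0 : nat, (0 < r0)%nat /\
    forall q r : nat, (r0 <= r)%nat -> (r <= q)%nat ->
      ~ (exists A : cmd, decides_gap_in_time P A q r (beta r)).

Definition tends_to_infty_nat (h : nat -> nat) : Prop :=
  forall M : nat, exists N : nat, forall x : nat, (N <= x)%nat -> (M <= h x)%nat.

Definition tends_to_infty_R (h : nat -> R) : Prop :=
  forall M : R, exists N : nat, forall x : nat, (N <= x)%nat -> M <= h x.

(* Given a decider [A] for the gap (q1, r1) of P1, pick q so large that f q >= q1 and
   run the reduction with parameters (q, r1) followed by [A] on its output: this decides
   the gap (q, g r1) of P0.  For fixed q, r1 the reduction takes time O(|I|^d) and its
   output has length O(|I|^(d+1)), so if [A] runs in time O(|X|^e) the composite runs
   in time O(|I|^((d+1) e)) (as soon as e >= 1).  With c = 1/(d+1) and e = c beta(g r1)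
   this is O(|I|^beta(g r1)), which the hardness of P0 forbids once g r1 >= r0. *)

From Stdlib Require Import Reals Lra Lia List Arith FunctionalExtensionality.
Import ListNotations.

Open Scope nat_scope.

Fixpoint cmd_shift (K : nat) (c : cmd) : cmd :=
  match c with
  | CCons i b => CCons (i + K) b
  | CTail i => CTail (i + K)
  | CCopy i j => CCopy (i + K) (j + K)
  | CSeq c1 c2 => CSeq (cmd_shift K c1) (cmd_shift K c2)
  | CIf i c1 c2 => CIf (i + K) (cmd_shift K c1) (cmd_shift K c2)
  | CWhile i c1 => CWhile (i + K) (cmd_shift K c1)
  end.

Fixpoint max_reg (c : cmd) : nat :=
  match c with
  | CCons i _ | CTail i => i
  | CCopy i j => Nat.max i j
  | CSeq c1 c2 => Nat.max (max_reg c1) (max_reg c2)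
  | CIf i c1 c2 => Nat.max i (Nat.max (max_reg c1) (max_reg c2))
  | CWhile i c1 => Nat.max i (max_reg c1)
  end.

Lemma upd_shift (s : state) i K v j :
  upd s (i + K) v (j + K) = upd (fun j => s (j + K)) i v j.
Proof.
  unfold upd. destruct (Nat.eqb_spec (j + K) (i + K)), (Nat.eqb_spec j i); lia || auto.
Qed.

Lemma exec_shift K c s1 s2 n :
  exec c s1 s2 n -> forall s, (forall j, s (j + K) = s1 j) ->
  exists s', exec (cmd_shift K c) s s' n /\ forall j, s' (j + K) = s2 j.
Proof.
  induction 1; intros s0 Hs; simpl.
  1-3: eexists; split; [constructor|];
       intro x; rewrite upd_shift; unfold upd; destruct (Nat.eqb x i); rewrite ?Hs; auto.
  - destruct (IHexec1 s0 Hs) as [sa [Ea Ha]]. destruct (IHexec2 sa Ha) as [sb [Eb Hb]].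
    exists sb; split; [econstructor; eauto | auto].
  - destruct (IHexec s0 Hs) as [sa [Ea Ha]].
    exists sa; split; auto. apply EIfT; auto. rewrite Hs; auto.
  - destruct (IHexec s0 Hs) as [sa [Ea Ha]].
    exists sa; split; auto. apply EIfF; auto. rewrite Hs; auto.
  - exists s0; split; auto. apply EWhileF. rewrite Hs; auto.
  - destruct (IHexec1 s0 Hs) as [sa [Ea Ha]]. destruct (IHexec2 sa Ha) as [sb [Eb Hb]].
    exists sb; split; auto. eapply EWhileT; eauto. rewrite Hs; auto.
Qed.

Lemma exec_high_regs c s s' n :
  exec c s s' n -> forall x, max_reg c < x -> s' x = s x.
Proof.
  induction 1; intros x Hx; simpl in Hx; unfold upd;
    try (destruct (Nat.eqb_spec x i); [lia | reflexivity]); auto.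
  - rewrite IHexec2, IHexec1; auto; lia.
  - apply IHexec; lia.
  - apply IHexec; lia.
  - rewrite IHexec2, IHexec1; simpl; auto; lia.
Qed.

Lemma exec_length_le c s s' n :
  exec c s s' n -> forall L, (forall y, length (s y) <= L) ->
  forall x, length (s' x) <= L + n.
Proof.
  induction 1; intros L HL x; unfold upd;
    try (destruct (Nat.eqb x i); simpl; [|specialize (HL x); lia]).
  - specialize (HL i); lia.
  - specialize (HL i); destruct (s i); simpl in *; lia.
  - specialize (HL j); lia.
  - specialize (IHexec2 _ (IHexec1 L HL) x); lia.
  - specialize (IHexec L HL x); lia.
  - specialize (IHexec L HL x); lia.
  - specialize (HL x); lia.
  - specialize (IHexec2 _ (IHexec1 L HL) x); lia.
Qed.

Lemma upd_same (s : state) i v : upd s i v i = v.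
Proof. unfold upd. rewrite Nat.eqb_refl. reflexivity. Qed.

Lemma upd_upd_same (s : state) i v w : upd (upd s i v) i w = upd s i w.
Proof.
  apply functional_extensionality; intro j. unfold upd. destruct (Nat.eqb j i); rewrite ?Hs; auto.
Qed.

Lemma unary_app_cons k (l : list bool) : unary k ++ true :: l = true :: unary k ++ l.
Proof. unfold unary; induction k as [|k IH]; simpl; [reflexivity | rewrite IH; reflexivity]. Qed.

Fixpoint push_ones (i k : nat) : cmd :=
  match k with
  | 0 => CCopy i i
  | S k' => CSeq (CCons i true) (push_ones i k')
  end.

Lemma exec_push_ones i k s :
  exec (push_ones i k) s (upd s i (unary k ++ s i)) (S k).
Proof.
  revert s; induction k as [|k IH]; intro s; simpl.
  - constructor.
  - change (S (S k)) with (1 + S k). eapply ESeq; [constructor|].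
    specialize (IH (upd s i (true :: s i))).
    rewrite upd_upd_same, upd_same, unary_app_cons in IH. exact IH.
Qed.

Definition load_unary (q r : nat) : cmd := CSeq (push_ones 1 q) (push_ones 2 r).

Lemma exec_load_unary I q r :
  exec (load_unary q r) (init1 I) (init3 I (unary q) (unary r)) (S q + S r).
Proof.
  replace (init3 I (unary q) (unary r))
    with (upd (upd (init1 I) 1 (unary q ++ [])) 2 (unary r ++ [])).
  - eapply ESeq; apply exec_push_ones.
  - apply functional_extensionality; intros [|[|[|j]]]; simpl; rewrite ?app_nil_r; reflexivity.
Qed.

(* Runs [c], then [A] on the output of [c], using the registers from [K] on for [A]. *)
Definition pipe (K : nat) (c A : cmd) : cmd :=
  CSeq c (CSeq (CCopy K 0) (CSeq (cmd_shift K A) (CCopy 0 K))).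

Lemma exec_pipe K c A s s1 n sA nA :
  max_reg c < K -> (forall j, K < j -> s j = []) ->
  exec c s s1 n -> exec A (init1 (s1 0)) sA nA ->
  exists s2, exec (pipe K c A) s s2 (n + (1 + (nA + 1))) /\ s2 0 = sA 0.
Proof.
  intros HK Hempty Ec EA.
  destruct (exec_shift K A _ _ _ EA (upd s1 K (s1 0))) as [s' [E' Hs']].
  { intros [|j]; unfold upd.
    - rewrite Nat.eqb_refl; reflexivity.
    - destruct (Nat.eqb_spec (S j + K) K); [lia|].
      rewrite (exec_high_regs _ _ _ _ Ec) by lia. apply Hempty; lia. }
  exists (upd s' 0 (s' K)); split.
  - repeat (eapply ESeq; eauto); constructor.
  - exact (Hs' 0).
Qed.

Definition reduce_then_decide (Red A : cmd) (q r : nat) : cmd :=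
  CSeq (load_unary q r) (pipe (S (Nat.max 2 (max_reg Red))) Red A).

Lemma exec_reduce_then_decide Red A q r I sR nR sA nA :
  exec Red (init3 I (unary q) (unary r)) sR nR ->
  exec A (init1 (sR 0)) sA nA ->
  exists s, exec (reduce_then_decide Red A q r) (init1 I) s
              (S q + S r + (nR + (1 + (nA + 1)))) /\ s 0 = sA 0.
Proof.
  intros ER EA.
  assert (HK : max_reg Red < S (Nat.max 2 (max_reg Red))) by lia.
  assert (Hempty : forall j, S (Nat.max 2 (max_reg Red)) < j ->
                     init3 I (unary q) (unary r) j = [])
    by (intros [|[|[|j]]] Hj; simpl; auto; lia).
  destruct (exec_pipe _ _ _ _ _ _ _ _ HK Hempty ER EA) as [s [Es Hs]].
  exists s; split; auto. eapply ESeq; [apply exec_load_unary | exact Es].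
Qed.
Lemma short_lists_uniform_bound (H : list bool -> nat -> Prop) :
  (forall x, exists n, H x n) ->
  forall m, exists B, forall x, length x <= m -> exists n, H x n /\ n <= B.
Proof.
  intros HH m. revert H HH. induction m as [|m IH]; intros H HH;
    destruct (HH []) as [n Hn].
  - exists n. intros [|b x] Hx; simpl in Hx; [exists n; auto | lia].
  - destruct (IH (fun y => H (true :: y))) as [B1 HB1]; [intros; apply HH|].
    destruct (IH (fun y => H (false :: y))) as [B2 HB2]; [intros; apply HH|].
    exists (n + B1 + B2). intros [|[] y] Hy; simpl in Hy.
    + exists n; split; auto; lia.
    + destruct (HB1 y) as [n' [? ?]]; [lia|]. exists n'; split; auto; lia.
    + destruct (HB2 y) as [n' [? ?]]; [lia|]. exists n'; split; auto; lia.
Qed.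

Open Scope R_scope.

(* Absorbs the finitely many inputs shorter than the threshold of [decides_gap_in_time]
   into an additive constant; [Nat.max 1] avoids the junk value of [Rpower 0]. *)
Lemma decides_gap_in_time_uniform P A q r e :
  decides_gap_in_time P A q r e ->
  exists B C, 0 <= B /\ 0 <= C /\ forall I, exists s n,
    exec A (init1 I) s n /\
    ((OPT P I < r)%nat -> hd false (s 0%nat) = false) /\
    ((q <= OPT P I)%nat -> hd false (s 0%nat) = true) /\
    INR n <= B + C * Rpower (INR (Nat.max 1 (length I))) e.
Proof.
  intros [C [n0 HA]].
  destruct (short_lists_uniform_bound (fun I n => exists s, exec A (init1 I) s n /\
      ((OPT P I < r)%nat -> hd false (s 0%nat) = false) /\
      ((q <= OPT P I)%nat -> hd false (s 0%nat) = true)))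
    with (m := n0) as [B HB].
  { intro I. destruct (HA I) as [s [n [E [H1 [H2 _]]]]]. exists n, s; auto. }
  exists (INR B), (Rabs C); split; [apply pos_INR | split; [apply Rabs_pos |]].
  intro I.
  assert (HP : 0 <= Rabs C * Rpower (INR (Nat.max 1 (length I))) e)
    by (apply Rmult_le_pos; [apply Rabs_pos | left; apply exp_pos]).
  destruct (le_lt_dec (length I) n0) as [Hshort | Hlong].
  - destruct (HB I Hshort) as [n [[s [E [H1 H2]]] Hn]].
    exists s, n. repeat split; auto. apply le_INR in Hn. lra.
  - destruct (HA I) as [s [n [E [H1 [H2 Hn]]]]].
    exists s, n. repeat split; auto.
    rewrite Nat.max_r by lia.
    eapply Rle_trans; [apply Hn; lia|].
    assert (C * Rpower (INR (length I)) e <= Rabs C * Rpower (INR (length I)) e)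
      by (apply Rmult_le_compat_r; [left; apply exp_pos | apply Rle_abs]).
    assert (0 <= INR B) by apply pos_INR.
    lra.
Qed.

Lemma pow_le_Rpower L k b : 1 <= L -> INR k <= b -> L ^ k <= Rpower L b.
Proof. intros HL Hk. rewrite <- Rpower_pow by lra. apply Rle_Rpower; auto. Qed.

Lemma pow_add1_le L d : 1 <= L -> (L + 1) ^ d <= 2 ^ d * L ^ d.
Proof. intro HL. rewrite <- Rpow_mult_distr. apply pow_incr. lra. Qed.

Lemma Rpower_le_mul_pow X K L m e :
  0 <= e -> 0 < X -> 0 < K -> 0 < L -> X <= K * L ^ m ->
  Rpower X e <= Rpower K e * Rpower L (INR m * e).
Proof.
  intros He HX HK HL HXK.
  eapply Rle_trans; [apply Rle_Rpower_l; [exact He | split; [exact HX | exact HXK]]|].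
  rewrite <- Rpower_mult, Rpower_pow by exact HL.
  rewrite Rpower_mult_distr by (auto; apply pow_lt; exact HL). lra.
Qed.

(* The reduction's output has length [O(L^(d+1))], so a decider running in time
   [O(X^e)] on it costs [O(L^((d+1) e))]; everything else is polynomial of lower degree. *)
Lemma pipeline_time_bound (q r T B C e : R) (d : nat) :
  0 <= q -> 0 <= r -> 0 <= T -> 0 <= B -> 0 <= C -> 1 <= e ->
  exists K, forall L nR nA X, 1 <= L -> nR <= T * (L + 1) ^ d ->
    0 < X -> X <= L + q + r + nR + 1 -> nA <= B + C * Rpower X e ->
    q + r + nR + nA + 4 <= K * Rpower L (INR (S d) * e).
Proof.
  intros Hq Hr HT HB HC He.
  set (K1 := 2 + q + r + T * 2 ^ d).
  assert (H2d : 1 <= 2 ^ d) by (apply pow_R1_Rle; lra).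
  assert (HK1 : 0 < K1) by (unfold K1; nra).
  assert (HRK1 : 0 < Rpower K1 e) by apply exp_pos.
  exists (q + r + 4 + B + T * 2 ^ d + C * Rpower K1 e).
  intros L nR nA X HL HnR HX0 HX HnA.
  set (P := Rpower L (INR (S d) * e)).
  assert (HSd : 0 < INR (S d)) by (apply lt_0_INR; lia).
  assert (HLd : 1 <= L ^ d) by (apply pow_R1_Rle; exact HL).
  assert (HLSd : L ^ d <= L ^ S d /\ L <= L ^ S d /\ 1 <= L ^ S d) by (simpl; nra).
  assert (HLP : L ^ S d <= P) by (apply pow_le_Rpower; nra).
  assert (HnR' : nR <= T * 2 ^ d * L ^ S d).
  { eapply Rle_trans; [exact HnR|]. rewrite Rmult_assoc. apply Rmult_le_compat_l; [lra|].
    eapply Rle_trans; [apply pow_add1_le; exact HL|]. apply Rmult_le_compat_l; nra. }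
  assert (HXe : Rpower X e <= Rpower K1 e * P).
  { apply Rpower_le_mul_pow; try lra. unfold K1. nra. }
  assert (0 <= T * 2 ^ d) by nra.
  assert (C * Rpower X e <= C * Rpower K1 e * P)
    by (rewrite Rmult_assoc; apply Rmult_le_compat_l; lra).
  nra.
Qed.

Lemma gap_decider_of_reduction (P0 P1 : opt_problem) (Red A : cmd)
    (T d q r q1 r1 : nat) (e : R) :
  (forall I0, exists s n,
     exec Red (init3 I0 (unary q) (unary r1)) s n /\
     (n <= T * S (length I0) ^ d)%nat /\
     ((q <= OPT P0 I0)%nat -> (q1 <= OPT P1 (s 0%nat))%nat) /\
     ((OPT P0 I0 < r)%nat -> (OPT P1 (s 0%nat) < r1)%nat)) ->
  1 <= e ->
  decides_gap_in_time P1 A q1 r1 e ->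
  exists A0, decides_gap_in_time P0 A0 q r (INR (S d) * e).
Proof.
  intros Hred He HA.
  destruct (decides_gap_in_time_uniform _ _ _ _ _ HA) as [B [C [HB [HC HAu]]]].
  destruct (pipeline_time_bound (INR q) (INR r1) (INR T) B C e d)
    as [K HK]; try apply pos_INR; auto.
  exists (reduce_then_decide Red A q r1), K, 1%nat.
  intro I.
  destruct (Hred I) as [sR [nR [ER [HnR [Hyes Hno]]]]].
  destruct (HAu (sR 0%nat)) as [sA [nA [EA [Hlow [Hhigh HnA]]]]].
  destruct (exec_reduce_then_decide _ _ _ _ _ _ _ _ _ ER EA) as [s [Es Hs]].
  exists s, (S q + S r1 + (nR + (1 + (nA + 1))))%nat. split; [exact Es|]. rewrite Hs.
  split; [auto | split; [auto | intro HI]].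
  assert (Hout : (length (sR 0%nat) <= length I + q + r1 + nR)%nat).
  { apply (exec_length_le _ _ _ _ ER).
    intros [|[|[|y]]]; simpl; unfold unary; rewrite ?repeat_length; lia. }
  replace (INR (S q + S r1 + (nR + (1 + (nA + 1))))) with (INR q + INR r1 + INR nR + INR nA + 4)
    by (rewrite !plus_INR, !S_INR, INR_0; ring).
  apply HK with (X := INR (Nat.max 1 (length (sR 0%nat)))); auto.
  - apply le_INR in HI. exact HI.
  - apply le_INR in HnR. rewrite mult_INR, pow_INR, S_INR in HnR. exact HnR.
  - apply lt_0_INR. lia.
  - assert (Nat.max 1 (length (sR 0%nat)) <= length I + q + r1 + nR + 1)%nat by lia.
    apply le_INR in H. rewrite !plus_INR in H. exact H.
Qed.

Theorem proposition3 (f g : nat -> nat) (beta : nat -> R) (P0 P1 : opt_problem) :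
  tends_to_infty_nat f -> tends_to_infty_nat g -> tends_to_infty_R beta ->
  fpt_gap_reducible P0 P1 f g ->
  weakly_inherently_enumerative P0 beta ->
  exists c : R, 0 < c /\
    weakly_inherently_enumerative P1 (fun r => c * beta (g r)).
Proof.
  intros Hf Hg Hbeta [Red [t [d [_ Hred]]]] [r0 [Hr0 Hhard]].
  assert (HSd : 0 < INR (S d)) by (apply lt_0_INR; lia).
  exists (/ INR (S d)); split; [apply Rinv_0_lt_compat, HSd|].
  destruct (Hbeta (INR (S d))) as [Nb HNb].
  destruct (Hg (Nat.max r0 Nb)) as [Ng HNg].
  exists (S Ng); split; [lia|].
  intros q1 r1 Hr1 Hq1 [A HA].
  specialize (HNg r1 ltac:(lia)).
  destruct (Hf q1) as [Nf HNf].
  set (q := Nat.max (g r1) Nf).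
  apply (Hhard q (g r1)); [lia | unfold q; lia |].
  replace (beta (g r1)) with (INR (S d) * (/ INR (S d) * beta (g r1))) by (field; lra).
  apply (gap_decider_of_reduction P0 P1 Red A (t q r1) d q (g r1) q1 r1); auto.
  - intro I0.
    destruct (Hred I0 q r1) as [s [n [E [Hn [Hyes Hno]]]]].
    exists s, n. repeat split; auto.
    + intro HI0. specialize (HNf q ltac:(unfold q; lia)).
      specialize (Hyes ltac:(unfold q; lia) HI0). lia.
    + intro HI0. apply Hno; [lia | exact HI0].
  - specialize (HNb (g r1) ltac:(lia)).
    rewrite <- (Rinv_l (INR (S d))) by lra.
    apply Rmult_le_compat_l; [left; apply Rinv_0_lt_compat, HSd | exact HNb].
Qed.
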